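(* If a disjunctive program $P$ has an inconsistent module sequence, then $P$ is inconsistent.
   Context: A disjunctive program is a set of rules $A_1\vee\dots\vee A_m\leftarrow L_1,\dots,L_n$ ($m>0$, $n\ge0$), $A_j$ atoms, $L_i$ atoms or negated atoms $\mathtt{not}\,A$, possibly with function symbols. $\mathsf{Ground}(P)$ is its ground instantiation. For a set $M$ of ground atoms, $P^M$ is obtained from $\mathsf{Ground}(P)$ by deleting rules having some $\mathtt{not}\,B$ in the body with $B\in M$ and deleting the negative literals from the remaining rules; $M$ is a stable model iff it is a minimal Herbrand model of $P^M$. A program (ground or not) is consistent iff it has at least one stable model, inconsistent otherwise. The dependency graph has ground atoms as vertices and an edge $A\to B$ whenever some $r\in\mathsf{Ground}(P)$ has $A$ in its head and $B$ occurring in $r$ (body or head); $A$ depends on $B$ if there is a directed path from $A$ to $B$ (every atom depends on itself). With $GH$ the set of ground head atoms of $\mathsf{Ground}(P)$ and an enumeration $p_1,p_2,\dots$ of $GH$, the induced module sequence is $P_1=\{r\in\mathsf{Ground}(P)\mid p_1$ depends on some atom of $head(r)\}$, $P_{i+1}=P_i\cup\{r\in\mathsf{Ground}(P)\mid p_{i+1}$ depends on some atom of $head(r)\}$. A module sequence is inconsistent if some $P_i$ is inconsistent, and consistent otherwise. *)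

From Stdlib Require Import List Relations.
Import ListNotations.

Set Implicit Arguments.

(** A first-order signature: function symbols (constants have arity 0)
    and predicate symbols, each with an arity. *)
Record signature := {
  fsym : Type;
  farity : fsym -> nat;
  psym : Type;
  parity : psym -> nat
}.

Section Programs.
Variable S : signature.

Inductive term : Type :=
| Var : nat -> term
| App : fsym S -> list term -> term.

Inductive wf_term : term -> Prop :=
| wf_var : forall x, wf_term (Var x)
| wf_app : forall f l, length l = farity S f ->
    (forall t, In t l -> wf_term t) -> wf_term (App f l).

Inductive ground_term : term -> Prop :=
| ground_app : forall f l, length l = farity S f ->
    (forall t, In t l -> ground_term t) -> ground_term (App f l).

Record atom : Type := mkAtom { pred : psym S; args : list term }.

Definition wf_atom (a : atom) : Prop :=
  length (args a) = parity S (pred a) /\ forall t, In t (args a) -> wf_term t.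

Definition ground_atom (a : atom) : Prop :=
  length (args a) = parity S (pred a) /\ forall t, In t (args a) -> ground_term t.

Inductive literal : Type :=
| Pos : atom -> literal
| Neg : atom -> literal.

Definition lit_atom (l : literal) : atom :=
  match l with Pos a => a | Neg a => a end.

(** A rule  A_1 v ... v A_m <- L_1, ..., L_n. *)
Record rule : Type := mkRule { head : list atom; body : list literal }.

Definition wf_rule (r : rule) : Prop :=
  head r <> [] /\ (forall a, In a (head r) -> wf_atom a) /\
  (forall l, In l (body r) -> wf_atom (lit_atom l)).

Definition program := list rule.

Definition wf_program (P : program) : Prop := forall r, In r P -> wf_rule r.

Fixpoint subst_term (s : nat -> term) (t : term) : term :=
  match t with
  | Var x => s x
  | App f l => App f (map (subst_term s) l)
  end.

Definition subst_atom (s : nat -> term) (a : atom) : atom :=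
  mkAtom (pred a) (map (subst_term s) (args a)).

Definition subst_lit (s : nat -> term) (l : literal) : literal :=
  match l with Pos a => Pos (subst_atom s a) | Neg a => Neg (subst_atom s a) end.

Definition subst_rule (s : nat -> term) (r : rule) : rule :=
  mkRule (map (subst_atom s) (head r)) (map (subst_lit s) (body r)).

Definition ground_subst (s : nat -> term) : Prop := forall x, ground_term (s x).

(** A ground program is a (possibly infinite) set of ground rules. *)
Definition gprogram := rule -> Prop.

Definition Ground (P : program) : gprogram :=
  fun r' => exists r s, In r P /\ ground_subst s /\ r' = subst_rule s r.

Definition interp := atom -> Prop.

Definition pos_body (r : rule) : list atom :=
  flat_map (fun l => match l with Pos a => [a] | Neg _ => [] end) (body r).
Definition neg_body (r : rule) : list atom :=
  flat_map (fun l => match l with Pos _ => [] | Neg a => [a] end) (body r).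

Definition reduct (G : gprogram) (M : interp) : gprogram :=
  fun r' => exists r, G r /\ (forall B, In B (neg_body r) -> ~ M B) /\
            r' = mkRule (head r) (map Pos (pos_body r)).

Definition is_model (G : gprogram) (N : interp) : Prop :=
  forall r, G r ->
    (forall l, In l (body r) ->
       match l with Pos a => N a | Neg a => ~ N a end) ->
    exists a, In a (head r) /\ N a.

Definition minimal_herbrand_model (G : gprogram) (M : interp) : Prop :=
  (forall a, M a -> ground_atom a) /\ is_model G M /\
  forall N, (forall a, N a -> M a) -> is_model G N -> forall a, M a -> N a.

Definition stable_model (G : gprogram) (M : interp) : Prop :=
  minimal_herbrand_model (reduct G M) M.

Definition consistent (G : gprogram) : Prop := exists M, stable_model G M.

Definition dep_edge (P : program) (A B : atom) : Prop :=
  exists r, Ground P r /\ In A (head r) /\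
    (In B (head r) \/ exists l, In l (body r) /\ lit_atom l = B).

Definition depends (P : program) : atom -> atom -> Prop :=
  clos_refl_trans atom (dep_edge P).

Definition GH (P : program) (A : atom) : Prop :=
  exists r, Ground P r /\ In A (head r).

(** An enumeration p_0, p_1, ... of GH (finite or infinite): e i = Some p_i
    for i in an initial segment of nat, injective, with image exactly GH. *)
Definition enumeration_of_GH (P : program) (e : nat -> option atom) : Prop :=
  (forall i j, i <= j -> e j <> None -> e i <> None) /\
  (forall i j a, e i = Some a -> e j = Some a -> i = j) /\
  (forall a, GH P a <-> exists i, e i = Some a).

Definition module (P : program) (e : nat -> option atom) (i : nat) : gprogram :=
  fun r => Ground P r /\
    exists j a h, j <= i /\ e j = Some a /\ In h (head r) /\ depends P a h.

Definition inconsistent_module_sequence (P : program) (e : nat -> option atom) : Prop :=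
  exists i, e i <> None /\ ~ consistent (module P e i).

End Programs.

(* Splitting-set argument.  Let U be the set of atoms on which p_0, ..., p_i
   depend.  U is closed under the edges of the dependency graph, so the module
   P_i consists exactly of the rules of Ground(P) whose head meets U, and all
   atoms of those rules lie in U.  Hence every stable model M of Ground(P)
   restricts to a stable model M ∩ U of P_i: a model N of the reduct of P_i
   below M ∩ U extends, by the atoms of M outside U, to a model of the reduct
   of Ground(P) below M, so minimality of M forces N = M ∩ U. *)
From Stdlib Require Import List Relations Classical.

Set Implicit Arguments.

Section Reduct.
Variable S : signature.

Lemma in_pos_body (r : rule S) (a : atom S) :
  In a (pos_body r) <-> In (Pos a) (body r).
Proof.
  unfold pos_body; rewrite in_flat_map; split.
  - intros [[b|b] [Hl Ha]]; simpl in Ha; [destruct Ha as [<-|[]]; exact Hl | destruct Ha].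
  - intros H; exists (Pos a); simpl; auto.
Qed.

Lemma in_neg_body (r : rule S) (a : atom S) :
  In a (neg_body r) <-> In (Neg a) (body r).
Proof.
  unfold neg_body; rewrite in_flat_map; split.
  - intros [[b|b] [Hl Ha]]; simpl in Ha; [destruct Ha | destruct Ha as [<-|[]]; exact Hl].
  - intros H; exists (Neg a); simpl; auto.
Qed.

Lemma reduct_body_holds (r : rule S) (N : interp S) :
  (forall l, In l (map (@Pos S) (pos_body r)) ->
     match l with Pos a => N a | Neg a => ~ N a end) <->
  (forall a, In a (pos_body r) -> N a).
Proof.
  split.
  - intros H a Ha; exact (H (Pos a) (in_map _ _ _ Ha)).
  - intros H l Hl; apply in_map_iff in Hl as [a [<- Ha]]; exact (H a Ha).
Qed.

End Reduct.

Section Splitting.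
Variable S : signature.
Variables G G' : gprogram S.
Variable U : atom S -> Prop.

Hypothesis sub_G' : forall r, G' r -> G r.
Hypothesis G'_head_in : forall r, G' r -> forall a, In a (head r) -> U a.
Hypothesis G'_body_in : forall r, G' r -> forall l, In l (body r) -> U (lit_atom l).
Hypothesis G'_contains : forall r, G r -> (exists h, In h (head r) /\ U h) -> G' r.

Variable M : interp S.
Hypothesis M_stable : stable_model G M.

Let MU : interp S := fun a => M a /\ U a.

Lemma restrict_is_model : is_model (reduct G' MU) MU.
Proof.
  destruct M_stable as [_ [M_model _]].
  intros r' [r [Hr [Hneg ->]]] Hbody; cbn [body head] in *; rewrite reduct_body_holds in Hbody.
  destruct (M_model (mkRule (head r) (map (@Pos S) (pos_body r)))) as [a [Ha HMa]].
  - exists r; split; [exact (sub_G' Hr)|]; split; [|reflexivity].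
    intros B HB HMB; apply (Hneg B HB); split; [exact HMB|].
    apply (G'_body_in Hr (Neg B)); apply in_neg_body; exact HB.
  - apply reduct_body_holds; intros b Hb; exact (proj1 (Hbody b Hb)).
  - exists a; split; [exact Ha|]; split; [exact HMa | exact (G'_head_in Hr a Ha)].
Qed.

Lemma restrict_extend_is_model (N : interp S) :
  (forall a, N a -> MU a) -> is_model (reduct G' MU) N ->
  is_model (reduct G M) (fun a => N a \/ (M a /\ ~ U a)).
Proof.
  destruct M_stable as [_ [M_model _]]; intros HNM N_model.
  intros r' [r [Hr [Hneg ->]]] Hbody; cbn [body head] in *; rewrite reduct_body_holds in Hbody.
  destruct (classic (exists h, In h (head r) /\ U h)) as [Hmeet | Hdisj].
  - assert (Hr' : G' r) by exact (G'_contains Hr Hmeet).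
    destruct (N_model (mkRule (head r) (map (@Pos S) (pos_body r)))) as [b [Hb HNb]].
    + exists r; split; [exact Hr'|]; split; [|reflexivity].
      intros B HB [HMB _]; exact (Hneg B HB HMB).
    + apply reduct_body_holds; intros c Hc.
      destruct (Hbody c Hc) as [HNc | [_ HUc]]; [exact HNc|].
      exfalso; apply HUc, (G'_body_in Hr' (Pos c)), in_pos_body, Hc.
    + exists b; split; [exact Hb | left; exact HNb].
  - destruct (M_model (mkRule (head r) (map (@Pos S) (pos_body r)))) as [b [Hb HMb]].
    + exists r; auto.
    + apply reduct_body_holds; intros c Hc.
      destruct (Hbody c Hc) as [HNc | [HMc _]]; [exact (proj1 (HNM c HNc)) | exact HMc].
    + exists b; split; [exact Hb|]; right; split; [exact HMb|].
      intros HUb; apply Hdisj; exists b; auto.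
Qed.

Lemma stable_model_restrict : stable_model G' MU.
Proof.
  pose proof M_stable as [M_ground [_ M_min]].
  split; [intros a [Ha _]; exact (M_ground a Ha)|]; split; [exact restrict_is_model|].
  intros N HNM N_model a [HMa HUa].
  assert (Hsub : forall b, N b \/ (M b /\ ~ U b) -> M b).
  { intros b [HNb | [HMb _]]; [exact (proj1 (HNM b HNb)) | exact HMb]. }
  destruct (M_min _ Hsub (restrict_extend_is_model HNM N_model) a HMa) as [HNa | [_ HnUa]];
    [exact HNa | contradiction].
Qed.

End Splitting.

Section Modules.
Variable S : signature.
Variable P : program S.
Variable e : nat -> option (atom S).
Variable i : nat.

Definition depends_on_prefix (h : atom S) : Prop :=
  exists j a, j <= i /\ e j = Some a /\ depends P a h.

Lemma depends_on_prefix_step (A B : atom S) :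
  depends_on_prefix A -> dep_edge P A B -> depends_on_prefix B.
Proof.
  intros [j [a [Hj [Ha Hd]]]] HAB; exists j, a; repeat split; auto.
  eapply rt_trans; [exact Hd | apply rt_step; exact HAB].
Qed.

Lemma module_head_in (r : rule S) :
  module P e i r -> forall B, In B (head r) -> depends_on_prefix B.
Proof.
  intros [Hr [j [a [h [Hj [Ha [Hh Hd]]]]]]] B HB.
  apply (depends_on_prefix_step (A := h)); [exists j, a; auto|].
  exists r; auto.
Qed.

Lemma module_body_in (r : rule S) :
  module P e i r -> forall l, In l (body r) -> depends_on_prefix (lit_atom l).
Proof.
  intros [Hr [j [a [h [Hj [Ha [Hh Hd]]]]]]] l Hl.
  apply (depends_on_prefix_step (A := h)); [exists j, a; auto|].
  exists r; repeat split; eauto.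
Qed.

Lemma module_contains (r : rule S) :
  Ground P r -> (exists h, In h (head r) /\ depends_on_prefix h) -> module P e i r.
Proof.
  intros Hr [h [Hh [j [a [Hj [Ha Hd]]]]]]; split; [exact Hr|].
  exists j, a, h; auto.
Qed.

Lemma consistent_module : consistent (Ground P) -> consistent (module P e i).
Proof.
  intros [M HM]; eexists.
  exact (stable_model_restrict (module P e i) depends_on_prefix
           (fun r Hr => proj1 Hr) module_head_in module_body_in module_contains HM).
Qed.

End Modules.

Theorem proposition3p8 (S : signature) (P : program S) :
  wf_program P ->
  (exists e, enumeration_of_GH P e /\ inconsistent_module_sequence P e) ->
  ~ consistent (Ground P).
Proof.
  intros _ [e [_ [i [_ Hinc]]]] Hcons.
  exact (Hinc (consistent_module e i Hcons)).
Qed.
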